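(* Let $G,H\colon\mathbb{R}^n\to\mathbb{R}^n$ be selfadjoint linear maps and assume that $$\wedge^k G+\wedge^k H=\beta\wedge^k\mathrm{id}$$ for some constant $\beta\in\mathbb{R}$ with $\beta\neq 0$ and some $k\in\{1,\dots,n-1\}$. Then $G$ and $H$ have a common orthonormal basis of eigenvectors. If $k\ge 2$, then $G$ or $H$ is an isomorphism.
   Context: For a linear map $A$ on $\mathbb{R}^n$, $\wedge^kA$ denotes the induced linear map on the exterior power $\bigwedge^k\mathbb{R}^n$, $(\wedge^kA)(v_1\wedge\dots\wedge v_k)=Av_1\wedge\dots\wedge Av_k$. *)

From HB Require Import structures.
From mathcomp Require Import all_boot all_order all_algebra.
From mathcomp Require Import reals.
Set Implicit Arguments. Unset Strict Implicit. Unset Printing Implicit Defensive.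
Import Order.TTheory GRing.Theory Num.Theory.
Local Open Scope ring_scope.

(* k-element subsets of {0,...,n-1}: the index set of the standard basis
   e_I = e_{i_1} /\ ... /\ e_{i_k} (i_1 < ... < i_k) of /\^k R^n. *)
Definition kset (n k : nat) := {I : {set 'I_n} | #|I| == k}.

(* the increasing enumeration 'I_k -> 'I_n of a k-subset I *)
Definition kidx (n k : nat) (I : kset n k) (i : 'I_k) : 'I_n :=
  @enum_val _ (mem (val I)) (cast_ord (esym (eqP (valP I))) i).

Definition minor (R : comNzRingType) (n k : nat) (A : 'M[R]_n) (I J : kset n k) : R :=
  \det (\matrix_(i < k, j < k) A (kidx I i) (kidx J j)).

(* Matrix of the induced map /\^k A in the standard basis (e_I)_I of /\^k R^n
   (the k-th compound matrix): its (I,J) entry is the coefficient of e_I in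
   A e_{j_1} /\ ... /\ A e_{j_k}, i.e. the minor det A[I,J]. *)
Definition ext_pow (R : comNzRingType) (n k : nat) (A : 'M[R]_n)
  : 'M[R]_#|{: kset n k}| :=
  \matrix_(a, b) minor A (enum_val a) (enum_val b).

(* By Cauchy-Binet, /\^k is multiplicative, so the hypothesis survives
   conjugation by an orthogonal matrix; diagonalize H = diag(d) that way.  Then
   the k x k minors of G with row set I and column set J vanish for I <> J and
   equal beta - prod_(l in I) d_l for I = J.  If G_ij <> 0 and J is a k-set with
   i \notin J and j \in J, Cramer's rule on the columns J forces the J-minor of G
   to vanish, i.e. beta = prod_(l in J) d_l.  Doing this for J and, with G^T,
   for J - j + i gives d_j P = beta = d_i P with P <> 0, so d_i = d_j: G commutes
   with diag(d), hence with H.  Commuting symmetric matrices share an orthonormal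
   eigenbasis.  In such a basis the hypothesis reads
   prod_(l in J) g_l + prod_(l in J) h_l = beta for every k-set J, so when k >= 2
   a zero g_a and a zero h_b are excluded by any J containing a and b. *)

From HB Require Import structures.
From mathcomp Require Import all_boot all_order all_algebra.
From mathcomp Require Import reals.
From mathcomp Require Import fingroup perm.
From mathcomp Require Import complex.
From mathcomp Require spectral.
From mathcomp Require Import ring lra zify.
Import Order.TTheory GRing.Theory Num.Theory.
Set Implicit Arguments. Unset Strict Implicit. Unset Printing Implicit Defensive.
Local Open Scope ring_scope.

Section KSubsets.
Variables n k : nat.

Lemma kidx_inj (L : kset n k) : injective (kidx L).
Proof. by move=> i j /enum_val_inj /cast_ord_inj. Qed.

Lemma kidx_in (L : kset n k) i : kidx L i \in val L.
Proof. exact: enum_valP. Qed.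

Lemma kidx_surj (L : kset n k) x : x \in val L -> exists i, kidx L i = x.
Proof.
move=> xL; exists (cast_ord (eqP (valP L)) (enum_rank_in xL x)).
by rewrite /kidx cast_ordK enum_rankK_in.
Qed.

Lemma kidx_perm (L : kset n k) (f : 'I_k -> 'I_n) :
  injective f -> (forall a, f a \in val L) ->
  exists s : 'S_k, forall a, f a = kidx L (s a).
Proof.
move=> f_inj fL.
have f_codom a : f a \in codom (kidx L).
  by have [i <-] := kidx_surj (fL a); apply: codom_f.
pose g a := iinv (f_codom a).
have g_inj : injective g.
  by move=> a b /(congr1 (kidx L)); rewrite !f_iinv => /f_inj.
by exists (perm g_inj) => a; rewrite permE f_iinv.
Qed.

Lemma exists_kset (X Y : {set 'I_n}) :
  X \subset Y -> (#|X| <= k <= #|Y|)%N ->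
  exists L : kset n k, X \subset val L /\ val L \subset Y.
Proof.
move=> sXY /andP[leXk lekY].
pose S := [set x in take (k - #|X|) (enum (Y :\: X))].
have cardS : #|S| = (k - #|X|)%N.
  rewrite cardsE (card_uniqP _) ?take_uniq ?enum_uniq // size_take -cardE.
  by rewrite cardsD (setIidPr sXY); case: ltngtP => //; lia.
have sSYX : S \subset Y :\: X.
  by apply/subsetP => x; rewrite inE => /mem_take; rewrite mem_enum.
have cardXS : #|X :|: S| == k.
  rewrite cardsU cardS; apply/eqP.
  suff -> : X :&: S = set0 by rewrite cards0; lia.
  apply/setP => x; rewrite in_set0 in_setI; apply/negbTE/andP => -[xX xS].
  by have := subsetP sSYX x xS; rewrite in_setD xX.
exists (Sub (X :|: S) cardXS); split; first exact: subsetUl.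
by rewrite subUset sXY (subset_trans sSYX) // subsetDl.
Qed.

Lemma exists_kset_swap (J : kset n k) i j :
  i \notin val J -> j \in val J -> exists L : kset n k, val L = i |: (val J :\ j).
Proof.
move=> iJ jJ; have cardL : #|i |: (val J :\ j)| == k.
  have := cardsD1 j (val J); rewrite jJ (eqP (valP J)) /= => cardJ.
  by rewrite cardsU1 in_setD1 (negPf iJ) andbF /=; apply/eqP; lia.
by exists (Sub (i |: (val J :\ j)) cardL).
Qed.

End KSubsets.

Section CauchyBinet.
Variables (R : comNzRingType) (n k : nat).

Definition kperm_ffun (L : kset n k) (s : 'S_k) : {ffun 'I_k -> 'I_n} :=
  [ffun i => kidx L (s i)].

Lemma kperm_ffun_inj (L : kset n k) : injective (kperm_ffun L).
Proof.
move=> s t /ffunP est; apply/permP => i.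
by apply: (@kidx_inj _ _ L); have := est i; rewrite !ffunE.
Qed.

Lemma mem_kperm_ffun (L : kset n k) (f : {ffun 'I_k -> 'I_n}) :
  (f \in kperm_ffun L @: setT) = (f @: setT == val L).
Proof.
apply/imsetP/eqP => [[s _ ->] | fL].
  apply/setP => x; apply/imsetP/idP => [[i _ ->] | xL]; first by rewrite ffunE kidx_in.
  have [i <-] := kidx_surj xL.
  by exists (s^-1 i)%g; rewrite // ffunE permKV.
have f_inj : injective f.
  have /imset_injP f_inj : #|f @: setT| == #|[set: 'I_k]|.
    by rewrite fL (eqP (valP L)) cardsT card_ord.
  by move=> i j; apply: f_inj; rewrite in_setT.
have [s fs] : exists s : 'S_k, forall i, f i = kidx L (s i).
  by apply: kidx_perm f_inj _ => i; rewrite -fL imset_f.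
by exists s => //; apply/ffunP => i; rewrite ffunE fs.
Qed.

Lemma det_kidx_perm (Y : 'M[R]_(n, k)) (L : kset n k) (s : 'S_k) :
  \det (\matrix_(i, j) Y (kidx L (s i)) j) =
  (-1) ^+ s * \det (\matrix_(i, j) Y (kidx L i) j).
Proof.
have -> : \matrix_(i, j) Y (kidx L (s i)) j = row_perm s (\matrix_(i, j) Y (kidx L i) j).
  by apply/matrixP => i j; rewrite !mxE.
by rewrite row_permE det_mulmx det_perm.
Qed.

Lemma det_mulmx_ffun (X : 'M[R]_(k, n)) (Y : 'M[R]_(n, k)) :
  \det (X *m Y) = \sum_(f : {ffun 'I_k -> 'I_n})
     (\prod_i X i (f i)) * \det (\matrix_(i, j) Y (f i) j).
Proof.
transitivity (\sum_(s : 'S_k) \sum_(f : {ffun 'I_k -> 'I_n})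
    (-1) ^+ s * \prod_i (X i (f i) * Y (f i) (s i))).
  apply: eq_bigr => s _; rewrite -big_distrr /=; congr (_ * _).
  rewrite -(bigA_distr_bigA (fun i l => X i l * Y l (s i))) /=.
  by apply: eq_bigr => i _; rewrite mxE.
rewrite exchange_big; apply: eq_bigr => f _ /=.
rewrite /determinant big_distrr /=; apply: eq_bigr => s _.
rewrite big_split /= mulrCA; congr (_ * (_ * _)).
by apply: eq_bigr => i _; rewrite mxE.
Qed.

Theorem cauchy_binet (X : 'M[R]_(k, n)) (Y : 'M[R]_(n, k)) :
  \det (X *m Y) = \sum_(L : kset n k)
     \det (\matrix_(i, j) X i (kidx L j)) * \det (\matrix_(i, j) Y (kidx L i) j).
Proof.
pose F (f : {ffun 'I_k -> 'I_n}) :=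
  (\prod_i X i (f i)) * \det (\matrix_(i, j) Y (f i) j).
transitivity (\sum_f F f); first exact: det_mulmx_ffun.
transitivity (\sum_f \sum_(L : kset n k) if f \in kperm_ffun L @: setT then F f else 0).
  apply: eq_bigr => f _.
  case: (boolP (injectiveb f)) => [/injectiveP f_inj | ]; last first.
    case/injectivePn=> i1 [i2 ne12 eq12].
    have -> : F f = 0.
      rewrite [F f]/F (determinant_alternate ne12) ?mulr0 // => j.
      by rewrite !mxE eq12.
    by rewrite big1 // => L _; case: ifP.
  have card_f : #|f @: setT| == k by rewrite card_imset // cardsT card_ord.
  rewrite (bigD1 (Sub (f @: setT) card_f : kset n k)) ?mem_kperm_ffun ?eqxx //=.
  rewrite big1 ?addr0 // => L ne.
  by rewrite mem_kperm_ffun; case: eqP => // fL; case/eqP: ne; apply: val_inj.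
rewrite exchange_big; apply: eq_bigr => L _ /=.
rewrite -big_mkcond big_imset /=; last by move=> s t _ _; apply: kperm_ffun_inj.
rewrite [\det (\matrix_(i, j) X i _)]/determinant big_distrl /=.
rewrite (eq_bigl predT) => [|s]; last by rewrite in_setT.
apply: eq_bigr => s _; rewrite /F.
have -> : \matrix_(i, j) Y (kperm_ffun L s i) j = \matrix_(i, j) Y (kidx L (s i)) j.
  by apply/matrixP => i j; rewrite !mxE ffunE.
rewrite det_kidx_perm mulrCA mulrA; congr (_ * _ * _).
by apply: eq_bigr => i _; rewrite !mxE ffunE.
Qed.

End CauchyBinet.

Section Minors.
Variables (R : comNzRingType) (n k : nat).
Implicit Types (A B : 'M[R]_n) (I J : kset n k).

Lemma minorM A B I J : minor (A *m B) I J = \sum_L minor A I L * minor B L J.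
Proof.
rewrite /minor; have -> : \matrix_(i, j) (A *m B) (kidx I i) (kidx J j) =
    (\matrix_(i, l) A (kidx I i) l) *m (\matrix_(l, j) B l (kidx J j)).
  by apply/matrixP => i j; rewrite !mxE; apply: eq_bigr => l _; rewrite !mxE.
rewrite cauchy_binet; apply: eq_bigr => L _.
by rewrite /minor; congr (_ * _); apply: congr1; apply/matrixP => i j; rewrite !mxE.
Qed.

Lemma ext_powM A B : ext_pow k (A *m B) = ext_pow k A *m ext_pow k B.
Proof.
apply/matrixP => a b; rewrite !mxE minorM (reindex (@enum_val _ (mem {: kset n k}))) /=.
  by apply: eq_bigr => c _; rewrite !mxE.
by exists enum_rank => c _; rewrite ?enum_valK ?enum_rankK.
Qed.

Lemma minor_tr A I J : minor A^T I J = minor A J I.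
Proof. by rewrite /minor -det_tr; apply: congr1; apply/matrixP => i j; rewrite !mxE. Qed.

Lemma ext_pow_tr A : ext_pow k A^T = (ext_pow k A)^T.
Proof. by apply/matrixP => a b; rewrite !mxE minor_tr. Qed.

Lemma minor_diag (d : 'rV[R]_n) I J :
  minor (diag_mx d) I J = if I == J then \prod_(j in val I) d 0 j else 0.
Proof.
rewrite /minor; have [<- | neIJ] := eqVneq I J.
  have -> : \matrix_(i, j) diag_mx d (kidx I i) (kidx I j) = diag_mx (\row_i d 0 (kidx I i)).
    by apply/matrixP => i j; rewrite !mxE (inj_eq (@kidx_inj _ _ I)).
  rewrite det_diag [RHS]big_enum_val /=.
  have cardI : k = #|val I| by rewrite (eqP (valP I)).
  rewrite (reindex (cast_ord (esym cardI))) /=; last first.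
    by exists (cast_ord cardI) => x _; rewrite ?cast_ordK ?cast_ordKV.
  by apply: eq_bigr => i _; rewrite mxE /kidx; congr (d 0 (enum_val _)); apply: val_inj.
have [a aJ] : exists a, kidx I a \notin val J.
  apply/existsP; apply: contraT; rewrite negb_exists => /forallP IJ.
  case/eqP: neIJ; apply/val_inj/eqP.
  rewrite eqEcard (eqP (valP I)) (eqP (valP J)) leqnn andbT.
  by apply/subsetP => x /kidx_surj[b <-]; have := IJ b; rewrite negbK.
rewrite (expand_det_row _ a) big1 // => b _.
rewrite !mxE; case: eqP => [ab | _]; last by rewrite mulr0n mul0r.
by move: aJ; rewrite ab kidx_in.
Qed.

Lemma minor1 I J : minor (1%:M : 'M[R]_n) I J = (I == J)%:R.
Proof.
by rewrite -diag_const_mx minor_diag; case: eqP => // _; rewrite big1 // => j _; rewrite mxE.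
Qed.

Variables (G H : 'M[R]_n) (beta : R).
Hypothesis sumGH : ext_pow k G + ext_pow k H = beta *: ext_pow k 1%:M.

Lemma ext_pow_sum_minor I J : minor G I J + minor H I J = beta * (I == J)%:R.
Proof.
by move/matrixP: sumGH => /(_ (enum_rank I) (enum_rank J)); rewrite !mxE !enum_rankK minor1.
Qed.

Lemma ext_pow_sum_diag_minor (d : 'rV[R]_n) I J : H = diag_mx d ->
  minor G I J = if I == J then beta - \prod_(l in val I) d 0 l else 0.
Proof.
move=> Hd; have := ext_pow_sum_minor I J; rewrite Hd minor_diag.
by case: eqP => _; rewrite ?mulr1 ?mulr0 ?addr0 // => <-; rewrite addrK.
Qed.

Lemma ext_pow_sum_conj (P Q : 'M[R]_n) :
  ext_pow k (Q *m G *m P) + ext_pow k (Q *m H *m P) = beta *: ext_pow k (Q *m P).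
Proof.
by rewrite !ext_powM -mulmxDl -mulmxDr sumGH -scalemxAr -scalemxAl -!ext_powM mulmx1.
Qed.

End Minors.

Lemma mul_row_adj (R : comNzRingType) m (M : 'M[R]_m) (r : 'rV[R]_m) q :
  (r *m \adj M) 0 q = \det (\matrix_(a, b) if a == q then r 0 b else M a b).
Proof.
rewrite mxE (expand_det_row _ q); apply: eq_bigr => b _.
rewrite !mxE eqxx; congr (_ * (_ * \det _)).
by apply/matrixP => a c; rewrite !mxE eq_sym (negPf (neq_lift _ _)).
Qed.

Section EntryVanishing.
Variables (R : idomainType) (n k : nat).

Lemma col_minors_entry_eq0 (A : 'M[R]_n) (J : kset n k) i j :
  minor A J J != 0 -> (forall J', J' != J -> minor A J' J = 0) ->
  i \notin val J -> j \in val J -> A i j = 0.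
Proof.
move=> AJ_neq0 AJ'_eq0 iJ /kidx_surj[b <-].
pose M := \matrix_(a, c) A (kidx J a) (kidx J c).
pose r := \row_c A i (kidx J c).
have r_adj : r *m \adj M = 0.
  apply/rowP => q; rewrite mul_row_adj mxE.
  pose f a := if a == q then i else kidx J a.
  have f_inj : injective f.
    move=> a c; rewrite /f; case: eqP => [-> | ne_aq]; case: eqP => [-> | ne_cq] //.
    - by move=> eq_i; move: iJ; rewrite eq_i kidx_in.
    - by move=> eq_i; move: iJ; rewrite -eq_i kidx_in.
    - exact: kidx_inj.
  have [L defL] := exists_kset_swap iJ (kidx_in J q).
  have fL a : f a \in val L.
    rewrite defL /f; case: eqP => [_ | /eqP ne_aq]; first by rewrite setU11.
    by rewrite !inE kidx_in (inj_eq (@kidx_inj _ _ J)) ne_aq orbT.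
  have [s fs] := kidx_perm f_inj fL.
  pose C := \matrix_(l, c) A l (kidx J c).
  have -> : \matrix_(a, c) (if a == q then r 0 c else M a c) =
            \matrix_(a, c) C (kidx L (s a)) c.
    by apply/matrixP => a c; rewrite !mxE -fs /f; case: eqP.
  have LJ : L != J by apply: contraNneq iJ => <-; rewrite defL setU11.
  rewrite det_kidx_perm -[RHS](mulr0 ((-1) ^+ s)) -(AJ'_eq0 L LJ).
  by congr (_ * _); apply: congr1; apply/matrixP => a c; rewrite !mxE.
have : r *m \adj M *m M = 0 by rewrite r_adj mul0mx.
rewrite -mulmxA mul_adj_mx mul_mx_scalar => /eqP.
rewrite scalemx_eq0 (negPf AJ_neq0) => /eqP /rowP /(_ b).
by rewrite !mxE.
Qed.

Lemma ext_pow_sum_diag_prod (A : 'M[R]_n) (d : 'rV[R]_n) beta (J : kset n k) i j :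
  ext_pow k A + ext_pow k (diag_mx d) = beta *: ext_pow k 1%:M ->
  i \notin val J -> j \in val J -> A i j != 0 -> beta = \prod_(l in val J) d 0 l.
Proof.
move=> sumAD iJ jJ Aij_neq0.
have minorA I J' := ext_pow_sum_diag_minor sumAD I J' (erefl (diag_mx d)).
have : minor A J J = 0.
  apply: contraNeq Aij_neq0 => AJ_neq0; apply/eqP/(col_minors_entry_eq0 AJ_neq0) => // J' neJ.
  by rewrite minorA (negPf neJ).
by rewrite minorA eqxx => /eqP; rewrite subr_eq0 => /eqP.
Qed.

Lemma ext_pow_sum_diag_entry_eq0 (A : 'M[R]_n) (d : 'rV[R]_n) beta :
  (0 < k < n)%N -> beta != 0 ->
  ext_pow k A + ext_pow k (diag_mx d) = beta *: ext_pow k 1%:M ->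
  forall i j, d 0 i != d 0 j -> A i j = 0.
Proof.
move=> /andP[k_gt0 k_lt_n] beta_neq0 sumAD i j; apply: contraNeq => Aij_neq0.
have [<- // | ne_ij] := eqVneq i j.
have [J1 [sjJ1 sJ1i]] :
    exists J1 : kset n k, [set j] \subset val J1 /\ val J1 \subset ~: [set i].
  apply: exists_kset; first by rewrite sub1set !inE eq_sym.
  by rewrite cards1 cardsC1 card_ord k_gt0 -ltnS prednK // (leq_ltn_trans _ k_lt_n).
have jJ1 : j \in val J1 by rewrite -sub1set.
have iJ1 : i \notin val J1 by apply/negP => /(subsetP sJ1i); rewrite !inE eqxx.
have [J2 defJ2] := exists_kset_swap iJ1 jJ1.
have iJ2 : i \in val J2 by rewrite defJ2 setU11.
have jJ2 : j \notin val J2 by rewrite defJ2 !inE eqxx /= orbF eq_sym.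
have sumATD : ext_pow k A^T + ext_pow k (diag_mx d) = beta *: ext_pow k 1%:M.
  apply: (can_inj trmxK); rewrite linearD linearZ /= -!ext_pow_tr !trmxK.
  by rewrite tr_diag_mx trmx1.
have prodJ1 := ext_pow_sum_diag_prod sumAD iJ1 jJ1 Aij_neq0.
have prodJ2 : beta = \prod_(l in val J2) d 0 l.
  by apply: ext_pow_sum_diag_prod sumATD jJ2 iJ2 _; rewrite mxE.
rewrite defJ2 big_setU1 /= in prodJ2; last by rewrite !inE negb_and iJ1 orbT.
rewrite (big_setD1 j jJ1) /= in prodJ1.
have prod_neq0 : \prod_(l in val J1 :\ j) d 0 l != 0.
  by apply: contraNneq beta_neq0 => prod_eq0; rewrite prodJ1 prod_eq0 mulr0.
by apply/eqP/(mulIf prod_neq0); rewrite -prodJ1 -prodJ2.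
Qed.

End EntryVanishing.

Lemma ext_pow_sum_diag_unit (R : fieldType) n k (a b : 'rV[R]_n) beta :
  (1 < k <= n)%N -> beta != 0 ->
  ext_pow k (diag_mx a) + ext_pow k (diag_mx b) = beta *: ext_pow k 1%:M ->
  (diag_mx a \in unitmx) || (diag_mx b \in unitmx).
Proof.
move=> /andP[k_gt1 k_le_n] beta_neq0 sumD; apply: contraT.
rewrite negb_or !unitmxE !unitfE !det_diag !negbK.
move=> /andP[/prodf_eq0[x _ a_x] /prodf_eq0[y _ b_y]].
have [J [sxyJ _]] : exists J : kset n k, [set x; y] \subset val J /\ val J \subset setT.
  by apply: exists_kset; rewrite ?subsetT // cards2 cardsT card_ord; case: (x != y); lia.
have := ext_pow_sum_minor sumD J J; rewrite !minor_diag eqxx mulr1.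
have [xJ yJ] : x \in val J /\ y \in val J.
  by split; apply: (subsetP sxyJ); rewrite !inE eqxx ?orbT.
rewrite (big_setD1 x xJ) [X in _ + X](big_setD1 y yJ) (eqP a_x) (eqP b_y).
by rewrite /= !mul0r addr0 => beta0; rewrite -beta0 eqxx in beta_neq0.
Qed.

Section BlockDiagonal.
Variable R : comNzRingType.

Lemma mul_block_diag m1 m2 (X X' : 'M[R]_m1) (Y Y' : 'M[R]_m2) :
  block_mx X 0 0 Y *m block_mx X' 0 0 Y' = block_mx (X *m X') 0 0 (Y *m Y').
Proof. by rewrite mulmx_block !mulmx0 !mul0mx !addr0 !add0r. Qed.

Lemma conj_block_diag m (Q M : 'M[R]_(1 + m)) (Q2 M1 : 'M[R]_m) c :
  Q^T *m M *m Q = block_mx c%:M 0 0 M1 ->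
  (Q *m block_mx 1%:M 0 0 Q2)^T *m M *m (Q *m block_mx 1%:M 0 0 Q2) =
  block_mx c%:M 0 0 (Q2^T *m M1 *m Q2).
Proof.
move=> QM; rewrite trmx_mul !mulmxA -(mulmxA _ Q^T) -(mulmxA _ (Q^T *m M)) -mulmxA QM.
by rewrite tr_block_mx !trmx0 trmx1 mul_block_diag mulmx1 mul_block_diag mul1mx mulmxA.
Qed.

End BlockDiagonal.

Section OrthogonalConjugation.
Variables (R : comUnitRingType) (n : nat).
Implicit Types (A B Q : 'M[R]_n).

Lemma conj_mulmx Q A B : Q *m Q^T = 1%:M ->
  (Q^T *m A *m Q) *m (Q^T *m B *m Q) = Q^T *m (A *m B) *m Q.
Proof. by move=> Qo'; rewrite !mulmxA -(mulmxA _ Q) Qo' mulmx1. Qed.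

Lemma conj_mulmx_inj Q A B : Q *m Q^T = 1%:M ->
  Q^T *m A *m Q = Q^T *m B *m Q -> A = B.
Proof.
move=> Qo' /(congr1 (fun M => Q *m M *m Q^T)).
by rewrite !mulmxA Qo' !mul1mx -!mulmxA Qo' !mulmx1.
Qed.

Lemma orthogonal_conj_unitmx Q A : Q^T *m Q = 1%:M ->
  (Q^T *m A *m Q \in unitmx) = (A \in unitmx).
Proof.
move=> Qo; have : \det (Q^T *m Q) \is a GRing.unit by rewrite Qo det1 unitr1.
by rewrite !unitmxE !det_mulmx det_tr !unitrM => /andP[-> _]; rewrite andbT.
Qed.

Lemma orthogonal_diag_col_eigen Q A (d : 'rV[R]_n) i :
  Q^T *m Q = 1%:M -> Q^T *m A *m Q = diag_mx d -> A *m col i Q = d 0 i *: col i Q.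
Proof.
move=> Qo QA; have AQ : A *m Q = Q *m diag_mx d.
  by rewrite -QA !mulmxA (mulmx1C Qo) mul1mx.
have d_delta : diag_mx d *m delta_mx i (0 : 'I_1) = d 0 i *: delta_mx i 0.
  by apply/matrixP => a b; rewrite mul_diag_mx !mxE; case: eqP => [-> | _]; rewrite ?mulr0.
by rewrite !colE mulmxA AQ -mulmxA d_delta scalemxAr.
Qed.

End OrthogonalConjugation.

Section RealSymmetric.
Variable R : rcfType.
Local Notation toC := (real_complex R).
Local Notation Re_mx := (map_mx (@complex.Re R)).
Local Notation Im_mx := (map_mx (@complex.Im R)).

Lemma mulmx_trmxE m (x : 'rV[R]_m) : (x *m x^T) 0 0 = \sum_j x 0 j ^+ 2.
Proof. by rewrite mxE; apply: eq_bigr => j _; rewrite mxE expr2. Qed.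

Lemma mulmx_trmx_ge0 m (x : 'rV[R]_m) : 0 <= (x *m x^T) 0 0.
Proof. by rewrite mulmx_trmxE sumr_ge0 // => j _; rewrite sqr_ge0. Qed.

Lemma mulmx_trmx_gt0 m (x : 'rV[R]_m) : x != 0 -> 0 < (x *m x^T) 0 0.
Proof.
move=> x_neq0; rewrite lt_def mulmx_trmx_ge0 andbT mulmx_trmxE.
apply: contra x_neq0; rewrite psumr_eq0 => [/allP x0 | j _]; last exact: sqr_ge0.
apply/eqP/rowP => j; rewrite mxE; apply/eqP.
by rewrite -sqrf_eq0; exact: x0 (mem_index_enum j).
Qed.

Lemma symmetric_form_swap m (x y : 'rV[R]_m) (A : 'M[R]_m) :
  A^T = A -> (x *m A *m y^T) 0 0 = (y *m A *m x^T) 0 0.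
Proof.
by move=> Asym; rewrite -[x *m A *m y^T]trmxK [LHS]mxE !trmx_mul !trmxK Asym mulmxA.
Qed.

(* [x + i y] is an eigenvector of [A] for [p + i q]. *)
Lemma symmetric_eigen_pair_real m (A : 'M[R]_m) (x y : 'rV[R]_m) p q :
  A^T = A -> (x != 0) || (y != 0) ->
  x *m A = p *: x - q *: y -> y *m A = p *: y + q *: x -> q = 0.
Proof.
move=> Asym xy_neq0 xA yA.
have dot_sym : (y *m x^T) 0 0 = (x *m y^T) 0 0.
  by rewrite -[y *m x^T]trmxK [LHS]mxE trmx_mul !trmxK.
have entry (a b : R) (M N : 'M[R]_1) : (a *: M + b *: N) 0 0 = a * M 0 0 + b * N 0 0.
  by rewrite !mxE.
have := symmetric_form_swap x y Asym.
rewrite xA yA mulmxBl mulmxDl -!scalemxAl -scaleNr !entry.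
rewrite dot_sym => /eqP; rewrite -subr_eq0.
have -> : p * (x *m y^T) 0 0 + - q * (y *m y^T) 0 0 - (p * (x *m y^T) 0 0 + q * (x *m x^T) 0 0)
  = - (q * ((x *m x^T) 0 0 + (y *m y^T) 0 0)) by ring.
rewrite oppr_eq0 mulf_eq0 => /orP[/eqP // | ]; rewrite gt_eqF //.
have := mulmx_trmx_ge0 x; have := mulmx_trmx_ge0 y.
by case/orP: xy_neq0 => /mulmx_trmx_gt0; lra.
Qed.

Section RealImaginaryParts.
Variables p m : nat.
Implicit Types v : 'M[R[i]]_(p, m).

Lemma map_Re_mulmx l v (A : 'M[R]_(m, l)) :
  Re_mx (v *m map_mx toC A) = Re_mx v *m A.
Proof.
apply/matrixP => a b; rewrite !mxE (big_morph (@complex.Re R) (id1 := 0) (op1 := +%R)) //.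
  by apply: eq_bigr => c _; rewrite !mxE; case: (v a c) => x y /=; rewrite mulr0 subr0.
by move=> [x1 y1] [x2 y2].
Qed.

Lemma map_Im_mulmx l v (A : 'M[R]_(m, l)) :
  Im_mx (v *m map_mx toC A) = Im_mx v *m A.
Proof.
apply/matrixP => a b; rewrite !mxE (big_morph (@complex.Im R) (id1 := 0) (op1 := +%R)) //.
  by apply: eq_bigr => c _; rewrite !mxE; case: (v a c) => x y /=; rewrite mulr0 add0r.
by move=> [x1 y1] [x2 y2].
Qed.

Lemma map_Re_scale (a : R[i]) v :
  Re_mx (a *: v) = complex.Re a *: Re_mx v - complex.Im a *: Im_mx v.
Proof. by apply/matrixP => b c; rewrite !mxE; case: a => x y; case: (v b c). Qed.

Lemma map_Im_scale (a : R[i]) v :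
  Im_mx (a *: v) = complex.Re a *: Im_mx v + complex.Im a *: Re_mx v.
Proof.
by apply/matrixP => b c; rewrite !mxE; case: a => x y; case: (v b c) => /= *; rewrite addrC.
Qed.

Lemma map_ReIm_eq0 v : Re_mx v = 0 -> Im_mx v = 0 -> v = 0.
Proof.
move=> /matrixP Re0 /matrixP Im0; apply/matrixP => b c.
by have := Re0 b c; have := Im0 b c; rewrite !mxE; case: (v b c) => x y /= -> ->.
Qed.

End RealImaginaryParts.

Lemma symmetric_eigen_parts m (A : 'M[R]_m) (v : 'rV[R[i]]_m) a :
  A^T = A -> v != 0 -> v *m map_mx toC A = a *: v ->
  Re_mx v *m A = complex.Re a *: Re_mx v /\ Im_mx v *m A = complex.Re a *: Im_mx v.
Proof.
move=> Asym v_neq0 vA.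
have ReA : Re_mx v *m A = complex.Re a *: Re_mx v - complex.Im a *: Im_mx v.
  by rewrite -map_Re_mulmx vA map_Re_scale.
have ImA : Im_mx v *m A = complex.Re a *: Im_mx v + complex.Im a *: Re_mx v.
  by rewrite -map_Im_mulmx vA map_Im_scale.
have ReIm_neq0 : (Re_mx v != 0) || (Im_mx v != 0).
  rewrite -negb_and; apply: contra v_neq0 => /andP[/eqP Re0 /eqP Im0].
  by rewrite (map_ReIm_eq0 Re0 Im0).
have Im_a := symmetric_eigen_pair_real Asym ReIm_neq0 ReA ImA.
by rewrite ReA ImA Im_a !scale0r subr0 addr0.
Qed.

Lemma common_real_eigenvector m (A B : 'M[R]_m.+1) :
  A^T = A -> B^T = B -> A *m B = B *m A ->
  exists2 u : 'cV[R]_m.+1, u != 0 &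
    (exists a, A *m u = a *: u) /\ (exists b, B *m u = b *: u).
Proof.
move=> Asym Bsym AB.
have AB_C : map_mx toC A *m map_mx toC B = map_mx toC B *m map_mx toC A.
  by rewrite -!map_mxM AB.
have [v v_neq0 /andP[/sub_rVP[a vA] /sub_rVP[b vB]]] :=
  spectral.common_eigenvector2 (ltn0Sn m) AB_C.
have [ReA ImA] := symmetric_eigen_parts Asym v_neq0 vA.
have [ReB ImB] := symmetric_eigen_parts Bsym v_neq0 vB.
have col_eigen (M : 'M[R]_m.+1) (x : 'rV_m.+1) c :
    M^T = M -> x *m M = c *: x -> M *m x^T = c *: x^T.
  by move=> Msym xM; rewrite -{1}Msym -trmx_mul xM linearZ.
have [Re0 | Re_neq0] := eqVneq (Re_mx v) 0.
  exists (Im_mx v)^T.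
    by rewrite trmx_eq0; apply: contra v_neq0 => /eqP /(map_ReIm_eq0 Re0) ->.
  by split; [exists (complex.Re a) | exists (complex.Re b)]; apply: col_eigen.
exists (Re_mx v)^T; first by rewrite trmx_eq0.
by split; [exists (complex.Re a) | exists (complex.Re b)]; apply: col_eigen.
Qed.

(* For [w = 0] the junk value [2 / 0 = 0] makes this the identity. *)
Definition householder m (w : 'cV[R]_m) : 'M[R]_m :=
  1%:M - (2 / (w^T *m w) 0 0) *: (w *m w^T).

Lemma householder_tr m (w : 'cV[R]_m) : (householder w)^T = householder w.
Proof. by rewrite linearB /= linearZ /= trmx_mul trmxK trmx1. Qed.

Lemma householder_orthogonal m (w : 'cV[R]_m) :
  (householder w)^T *m householder w = 1%:M.
Proof.
rewrite householder_tr /householder; set d := (w^T *m w) 0 0; set c := 2 / d.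
have cd : c * c * d = c *+ 2.
  by have [d0 | d_neq0] := eqVneq d 0; [rewrite /c d0 invr0 !mulr0 mul0rn | rewrite /c; field].
rewrite mulmxBl !mulmxBr !mul1mx mulmx1.
rewrite -scalemxAl -scalemxAr scalerA mulmxA -[w *m w^T *m w]mulmxA.
rewrite [w^T *m w]mx11_scalar -/d mul_mx_scalar -scalemxAl scalerA cd.
by rewrite -scalerMnl mulr2n opprB addrK subrK.
Qed.

Lemma householder_reflect m (u v : 'cV[R]_m) :
  u^T *m u = 1%:M -> v^T *m v = 1%:M -> householder (v - u) *m u = v.
Proof.
move=> uu vv; rewrite /householder; set w := v - u; set s := (v^T *m u) 0 0.
have uv : (u^T *m v) 0 0 = s by rewrite -[u^T *m v]trmxK [LHS]mxE trmx_mul trmxK.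
have wu : w^T *m u = (s - 1)%:M.
  by rewrite linearB mulmxBl uu [v^T *m u]mx11_scalar raddfB.
have ww : (w^T *m w) 0 0 = 2 - 2 * s.
  rewrite [w^T]linearB /= mulmxBl !mulmxBr uu vv.
  rewrite [u^T *m v]mx11_scalar [v^T *m u]mx11_scalar uv.
  by rewrite -!raddfB mxE mulr1n -/s; ring.
rewrite mulmxBl mul1mx -scalemxAl -mulmxA wu mul_mx_scalar scalerA.
have [d0 | d_neq0] := eqVneq ((w^T *m w) 0 0) 0.
  have /eqP w0 : w == 0.
    by rewrite -trmx_eq0; apply: contraT => /mulmx_trmx_gt0; rewrite trmxK d0 ltxx.
  by rewrite w0 scaler0 subr0; apply/eqP; rewrite eq_sym -subr_eq0 -/w w0.
have -> : 2 / (w^T *m w) 0 0 * (s - 1) = -1.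
  by move: d_neq0; rewrite ww => d_neq0; field.
by rewrite scaleN1r opprK addrC subrK.
Qed.

Lemma common_unit_eigenvector m (A B : 'M[R]_m.+1) :
  A^T = A -> B^T = B -> A *m B = B *m A ->
  exists2 v : 'cV[R]_m.+1, v^T *m v = 1%:M &
    (exists a, A *m v = a *: v) /\ (exists b, B *m v = b *: v).
Proof.
move=> Asym Bsym AB; have [u u_neq0 [[a Au] [b Bu]]] := common_real_eigenvector Asym Bsym AB.
have := @mulmx_trmx_gt0 _ u^T; rewrite trmxK trmx_eq0 => /(_ u_neq0).
set r := (u^T *m u) 0 0 => r_gt0.
have eigen_scale (M : 'M[R]_m.+1) c x : M *m u = c *: u -> M *m (x *: u) = c *: (x *: u).
  by move=> Mu; rewrite -scalemxAr Mu !scalerA mulrC.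
exists ((Num.sqrt r)^-1 *: u); last by split; [exists a | exists b]; apply: eigen_scale.
rewrite -scalemxAr [(_ *: u)^T]linearZ /= -scalemxAl scalerA [u^T *m u]mx11_scalar -/r.
by rewrite scale_scalar_mx -invfM -expr2 sqr_sqrtr ?ltW // mulVf ?gt_eqF.
Qed.

Lemma orthogonal_completion m (v : 'cV[R]_(1 + m)) :
  v^T *m v = 1%:M -> exists2 Q : 'M[R]_(1 + m), Q^T *m Q = 1%:M & col 0 Q = v.
Proof.
move=> vv; pose e : 'cV[R]_(1 + m) := delta_mx 0 0.
have ee : e^T *m e = 1%:M.
  by rewrite trmx_delta mul_delta_mx; apply/matrixP => i j; rewrite !ord1 !mxE.
exists (householder (v - e)); first exact: householder_orthogonal.
by rewrite colE householder_reflect.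
Qed.

Lemma orthogonal_conj_block m (A Q : 'M[R]_(1 + m)) a :
  A^T = A -> Q^T *m Q = 1%:M -> A *m col 0 Q = a *: col 0 Q ->
  exists2 A1 : 'M[R]_m, A1^T = A1 & Q^T *m A *m Q = block_mx a%:M 0 0 A1.
Proof.
move=> Asym Qo AQ; set B := Q^T *m A *m Q.
have Bsym : B^T = B by rewrite !trmx_mul trmxK Asym mulmxA.
have Bcol i : B i 0 = a * (i == 0)%:R.
  have : col 0 B = a *: col 0 1%:M.
    by rewrite [LHS]colE -!mulmxA -colE AQ -scalemxAr colE mulmxA Qo -colE.
  by move/matrixP => /(_ i 0); rewrite !mxE.
have Brow j : B 0 j = a * (j == 0)%:R by rewrite -Bcol -{1}Bsym mxE.
clearbody B; exists (drsubmx B); first by rewrite trmx_drsub Bsym.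
rewrite -{1}(submxK B); congr block_mx; apply/matrixP => i j; rewrite !mxE ?ord1.
- by rewrite lshift0 Bcol eqxx mulr1n mulr1.
- by rewrite lshift0 Brow mulr0.
- by rewrite lshift0 Bcol mulr0.
Qed.

Theorem orthogonal_codiagonalization m (A B : 'M[R]_m) :
  A^T = A -> B^T = B -> A *m B = B *m A ->
  exists P : 'M[R]_m,
    [/\ P^T *m P = 1%:M, is_diag_mx (P^T *m A *m P) & is_diag_mx (P^T *m B *m P)].
Proof.
elim: m A B => [|m IH] A B Asym Bsym AB.
  by exists 1%:M; split; [rewrite trmx1 mulmx1 | apply/is_diag_mxP => -[] ..].
have [v vv [[a Av] [b Bv]]] := common_unit_eigenvector Asym Bsym AB.
have [Q Qo Qv] := orthogonal_completion vv.
have Qo' : Q *m Q^T = 1%:M := mulmx1C Qo.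
have := orthogonal_conj_block Asym Qo; rewrite Qv => /(_ a Av) [A1 A1sym QA].
have := orthogonal_conj_block Bsym Qo; rewrite Qv => /(_ b Bv) [B1 B1sym QB].
have A1B1 : A1 *m B1 = B1 *m A1.
  have := conj_mulmx (Q := Q) A B Qo'; rewrite AB -conj_mulmx // QA QB !mul_block_diag.
  by case/eq_block_mx.
have [Q2 [Q2o Q2A Q2B]] := IH A1 B1 A1sym B1sym A1B1.
exists (Q *m block_mx 1%:M 0 0 Q2); split.
- have := @conj_block_diag _ m Q 1%:M Q2 1%:M 1.
  by rewrite !mulmx1 Qo Q2o -!scalar_mx_block; apply.
- by rewrite (conj_block_diag _ QA) (@is_diag_block_mx _ 1 m 1 m) // !eqxx scalar_mx_is_diag.
- by rewrite (conj_block_diag _ QB) (@is_diag_block_mx _ 1 m 1 m) // !eqxx scalar_mx_is_diag.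
Qed.

End RealSymmetric.

Lemma ext_pow_sum_commute (R : rcfType) n k (G H : 'M[R]_n) beta :
  H^T = H -> (0 < k < n)%N -> beta != 0 ->
  ext_pow k G + ext_pow k H = beta *: ext_pow k 1%:M -> G *m H = H *m G.
Proof.
move=> Hsym k_bounds beta_neq0 sumGH.
have [Q [Qo _ /diag_mxP[d QH]]] := orthogonal_codiagonalization Hsym Hsym (erefl (H *m H)).
have Qo' := mulmx1C Qo.
have sumD := ext_pow_sum_conj sumGH Q Q^T; rewrite QH Qo in sumD.
have QGd_entry := ext_pow_sum_diag_entry_eq0 k_bounds beta_neq0 sumD.
apply: (conj_mulmx_inj Qo'); rewrite -!conj_mulmx // QH.
apply/matrixP => i j; rewrite mul_mx_diag mul_diag_mx [LHS]mxE [RHS]mxE mulrC.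
by have [-> // | /QGd_entry ->] := eqVneq (d 0 i) (d 0 j); rewrite !mulr0.
Qed.

Theorem lemma3p2 (R : realType) (n k : nat) (G H : 'M[R]_n) (beta : R) :
  G^T = G -> H^T = H ->
  (1 <= k)%N -> (k <= n - 1)%N ->
  beta != 0 ->
  ext_pow k G + ext_pow k H = beta *: ext_pow k (1%:M : 'M[R]_n) ->
  (exists v : 'I_n -> 'cV[R]_n,
      (forall i j : 'I_n, \sum_(l < n) v i l ord0 * v j l ord0 = (i == j)%:R) /\
      (forall i : 'I_n, exists lam mu : R,
          G *m v i = lam *: v i /\ H *m v i = mu *: v i)) /\
  ((2 <= k)%N -> G \in unitmx \/ H \in unitmx).
Proof.
move=> Gsym Hsym k_gt0 k_le beta_neq0 sumGH.
have k_bounds : (0 < k < n)%N by apply/andP; split; lia.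
have GH := ext_pow_sum_commute Hsym k_bounds beta_neq0 sumGH.
have [P [Po /diag_mxP[dG PG] /diag_mxP[dH PH]]] := orthogonal_codiagonalization Gsym Hsym GH.
split.
  exists (fun i => col i P); split => [i j | i].
    by move/matrixP: Po => /(_ i j); rewrite !mxE => <-; apply: eq_bigr => l _; rewrite !mxE.
  by exists (dG 0 i), (dH 0 i); split; apply: orthogonal_diag_col_eigen.
move=> k_gt1; have := ext_pow_sum_conj sumGH P P^T; rewrite PG PH Po => sumD.
have k_bounds' : (1 < k <= n)%N by apply/andP; split; lia.
have := ext_pow_sum_diag_unit k_bounds' beta_neq0 sumD.
by rewrite -PG -PH !orthogonal_conj_unitmx // => /orP.
Qed.
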